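(* Let $X$ be a topological space possessing an infinite metrizable gauge, let $\kappa$ be a regular cardinal with $\kappa\in\mathrm{MG}(X)$, let $G\in\mathcal{G}_\kappa$ and $d\in\mathrm{Met}(X;G)$. Then $\lambda_G\circ d\in\mathrm{Ult}(X;\mathrm{Arc}(G)^\perp)$, and $d$ and $\lambda_G\circ d$ are uniformly equivalent to each other.
   Context: A linearly ordered Abelian group is an Abelian group with a linear order compatible with addition. For $x,y\in G_{>0}$, $x\asymp y$ iff $y\le nx$ and $x\le my$ for some $n,m\in\mathbb{Z}_{\ge1}$; $\mathrm{Arc}(G)=G_{>0}/\asymp$, ordered by $[x]\preceq[y]$ iff ($nx<y$ for all $n$) or $x\asymp y$; $\mathrm{Arc}(G)^\perp$ is $\mathrm{Arc}(G)$ with a new least element $\perp$ adjoined. $\mathrm{abs}(x)=x$ for $x\ge 0$, $-x$ otherwise; $\lambda_G(x)=[\mathrm{abs}(x)]$ for $x\ne0$, $\lambda_G(0)=\perp$. For a bottomed linearly ordered set $S$ (least element $\perp_S$, $S^*=S\setminus\{\perp_S\}$), $\chi(S)$ is the least cardinal $\kappa>0$ such that some strictly decreasing family $(s_\alpha)_{\alpha<\kappa}$ in $S^*$ has every $t\in S^*$ bounded below by some $s_\alpha$. A $G$-metric: $d\colon X^2\to G$, $d(x,y)=0\iff x=y$, $d\ge0$, symmetric, triangle inequality. An $S$-ultrametric: $d\colon X^2\to S$, $d(x,y)=\perp_S\iff x=y$, symmetric, $d(x,y)\le\max\{d(x,z),d(z,y)\}$. Topologies via open balls of radii in $G_{>0}$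 (resp. $S^*$); $\mathrm{Met}(X;G)$, $\mathrm{Ult}(X;S)$ are those generating the topology of $X$. $\mathrm{MG}(X)$: cardinals $\kappa$ with some $G$, $\chi(\mathrm{Arc}(G)^\perp)=\kappa$, $\mathrm{Met}(X;G)\ne\emptyset$; infinite metrizable gauge: some $\kappa\in\mathrm{MG}(X)$ with $\kappa\ge\omega_0$. $\mathcal{G}_\kappa$: groups with $\chi(\mathrm{Arc}(G)^\perp)=\kappa$. Two such (ultra)metrics $d,e$ on $X$ are uniformly equivalent if for every admissible radius $\epsilon$ for $e$ there is an admissible $\delta$ for $d$ with $d(x,y)<\delta\Rightarrow e(x,y)<\epsilon$, and vice versa. *)

From Stdlib Require Import ClassicalEpsilon.
From mathcomp Require Import all_boot classical_sets topology.

Set Implicit Arguments.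
Unset Strict Implicit.
Unset Printing Implicit Defensive.

Record LOAG := {
  G_car :> Type;
  G0 : G_car;
  Gadd : G_car -> G_car -> G_car;
  Gopp : G_car -> G_car;
  Gle : G_car -> G_car -> Prop;
  Gadd_assoc : forall x y z, Gadd x (Gadd y z) = Gadd (Gadd x y) z;
  Gadd_comm : forall x y, Gadd x y = Gadd y x;
  Gadd_0 : forall x, Gadd G0 x = x;
  Gadd_opp : forall x, Gadd (Gopp x) x = G0;
  Gle_refl : forall x, Gle x x;
  Gle_trans : forall x y z, Gle x y -> Gle y z -> Gle x z;
  Gle_anti : forall x y, Gle x y -> Gle y x -> x = y;
  Gle_total : forall x y, Gle x y \/ Gle y x;
  Gle_add : forall x y z, Gle x y -> Gle (Gadd x z) (Gadd y z)
}.

Section Group.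
Variable G : LOAG.

Definition Glt (x y : G) : Prop := Gle x y /\ x <> y.

Fixpoint Gnmul (n : nat) (x : G) : G :=
  match n with O => G0 G | S k => Gadd x (Gnmul k x) end.

Definition Gabs (x : G) : G :=
  if excluded_middle_informative (Gle (G0 G) x) then x else Gopp x.

Definition Gasymp (x y : G) : Prop :=
  Glt (G0 G) x /\ Glt (G0 G) y /\
  (exists n, (1 <= n)%coq_nat /\ Gle y (Gnmul n x)) /\
  (exists m, (1 <= m)%coq_nat /\ Gle x (Gnmul m y)).

(* lambda_G(x) as a subset of G: the class {0} (= ⊥) if x = 0,
   and the Archimedean class [abs x] otherwise. *)
Definition lam_set (x : G) : G -> Prop :=
  fun y => (x = G0 G /\ y = G0 G) \/ (x <> G0 G /\ Gasymp (Gabs x) y).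

(* Arc(G)^⊥ : the Archimedean classes together with a bottom ⊥ = {0}. *)
Definition ArcB : Type := { A : G -> Prop | exists x, A = lam_set x }.

Definition lam (x : G) : ArcB := exist _ (lam_set x) (ex_intro _ x erefl).

Definition arc_bot : ArcB := lam (G0 G).

Definition arc_le (A B : ArcB) : Prop :=
  A = arc_bot \/
  exists x y, Glt (G0 G) x /\ Glt (G0 G) y /\ A = lam x /\ B = lam y /\
    ((forall n, (1 <= n)%coq_nat -> Glt (Gnmul n x) y) \/ Gasymp x y).

Definition is_Gmetric (X : Type) (d : X -> X -> G) : Prop :=
  (forall x y, d x y = G0 G <-> x = y) /\
  (forall x y, Gle (G0 G) (d x y)) /\
  (forall x y, d x y = d y x) /\
  (forall x y z, Gle (d x y) (Gadd (d x z) (d z y))).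

Definition Met (X : topologicalType) (d : X -> X -> G) : Prop :=
  is_Gmetric d /\
  forall U : set X, open U <->
    (forall x, U x -> exists r, Glt (G0 G) r /\
        (forall y, Glt (d x y) r -> U y)).

End Group.

Section Ultra.
Variables (S : Type) (leS : S -> S -> Prop) (botS : S).

Definition ltS (a b : S) : Prop := leS a b /\ a <> b.

Definition is_ultrametric (X : Type) (d : X -> X -> S) : Prop :=
  (forall x y, d x y = botS <-> x = y) /\
  (forall x y, d x y = d y x) /\
  (* d x y <= max (d x z) (d z y) in the linear order S *)
  (forall x y z, leS (d x y) (d x z) \/ leS (d x y) (d z y)).

Definition Ult (X : topologicalType) (d : X -> X -> S) : Prop :=
  is_ultrametric d /\
  forall U : set X, open U <->
    (forall x, U x -> exists r, r <> botS /\
        (forall y, ltS (d x y) r -> U y)).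
End Ultra.

Record WO := {
  wo_car :> Type;
  wo_lt : wo_car -> wo_car -> Prop;
  wo_irrefl : forall a, ~ wo_lt a a;
  wo_trans : forall a b c, wo_lt a b -> wo_lt b c -> wo_lt a c;
  wo_total : forall a b, wo_lt a b \/ a = b \/ wo_lt b a;
  wo_wf : well_founded wo_lt
}.

Definition injective_fun (A B : Type) (f : A -> B) : Prop :=
  forall a b, f a = f b -> a = b.

Definition is_cardinal (K : WO) : Prop :=
  forall a : K, ~ exists f : K -> { b : K | wo_lt b a }, injective_fun f.

Definition infinite_card (K : WO) : Prop :=
  exists f : nat -> K, injective_fun f.

(* regular: infinite, and cf(kappa) = kappa, i.e. every cofinal subset of
   kappa has cardinality kappa *)
Definition regular_card (K : WO) : Prop :=
  is_cardinal K /\ infinite_card K /\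
  forall A : K -> Prop,
    (forall a, exists b, A b /\ (wo_lt a b \/ a = b)) ->
    exists f : K -> { b : K | A b }, injective_fun f.

Definition coinitial_family (S : Type) (leS : S -> S -> Prop) (botS : S)
    (K : WO) : Prop :=
  exists s : K -> S,
    (forall a, s a <> botS) /\
    (forall a b, wo_lt a b -> ltS leS (s b) (s a)) /\
    (forall t, t <> botS -> exists a, leS (s a) t).

Definition chi_is (S : Type) (leS : S -> S -> Prop) (botS : S) (K : WO) : Prop :=
  is_cardinal K /\ inhabited K /\ coinitial_family leS botS K /\
  forall J : WO, is_cardinal J -> inhabited J -> coinitial_family leS botS J ->
    exists f : K -> J, injective_fun f.

Definition in_Gkappa (K : WO) (G : LOAG) : Prop :=
  chi_is (@arc_le G) (arc_bot G) K.

Definition in_MG (X : topologicalType) (K : WO) : Prop :=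
  exists G : LOAG, in_Gkappa K G /\ exists d : X -> X -> G, Met d.

Definition has_infinite_metrizable_gauge (X : topologicalType) : Prop :=
  exists K : WO, in_MG X K /\ infinite_card K.

Definition unif_equiv (X : Type) (G : LOAG) (S : Type) (leS : S -> S -> Prop)
    (botS : S) (d : X -> X -> G) (e : X -> X -> S) : Prop :=
  (forall eps, eps <> botS ->
     exists delta, Glt (G0 G) delta /\
       forall x y, Glt (d x y) delta -> ltS leS (e x y) eps) /\
  (forall eps, Glt (G0 G) eps ->
     exists delta, delta <> botS /\
       forall x y, ltS leS (e x y) delta -> Glt (d x y) eps).

(* Since chi(Arc(G)^⊥) is infinite, Arc(G) has no least element: otherwise a
   one-point family would already be coinitial.  Hence every e > 0 admits some
   delta > 0 with n delta < e for all n, so that d(x,y) < delta forces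
   λ(d(x,y)) < [e]; conversely λ(a) < [eps] forces a < eps.  So the balls of d
   and of λ∘d are mutually cofinal, which gives both the uniform equivalence and
   the equality of topologies.  The ultrametric inequality holds because
   d(x,y) <= 2 max(d(x,z), d(z,y)) and [2m] = [m]. *)

From Stdlib Require Import ClassicalEpsilon.
From mathcomp Require Import all_boot boolp classical_sets topology.

Set Implicit Arguments.
Unset Strict Implicit.

Section OrderedGroup.
Variable G : LOAG.
Implicit Types a b c e x y : G.

Lemma Gaddr0 a : Gadd a (G0 G) = a.
Proof. by rewrite Gadd_comm Gadd_0. Qed.

Lemma Gaddr_opp a : Gadd a (Gopp a) = G0 G.
Proof. by rewrite Gadd_comm Gadd_opp. Qed.

Lemma Gle_add2 a b c e : Gle a b -> Gle c e -> Gle (Gadd a c) (Gadd b e).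
Proof.
move=> lab lce; apply: Gle_trans (Gle_add c lab) _.
by rewrite (Gadd_comm b c) (Gadd_comm b e); apply: Gle_add.
Qed.

Lemma Gle_addr a b : Gle (G0 G) b -> Gle a (Gadd a b).
Proof. by move=> b_ge0; rewrite -{1}(Gaddr0 a); apply: Gle_add2 (Gle_refl a) b_ge0. Qed.

Lemma Gle_lt_trans a b c : Gle a b -> Glt b c -> Glt a c.
Proof.
move=> lab [lbc nbc]; split; first exact: Gle_trans lab lbc.
by move=> eac; subst c; apply: nbc (Gle_anti lbc lab).
Qed.

Lemma Glt_le_trans a b c : Glt a b -> Gle b c -> Glt a c.
Proof.
move=> [lab nab] lbc; split; first exact: Gle_trans lab lbc.
by move=> eac; subst c; apply: nab (Gle_anti lab lbc).
Qed.

Lemma Glt_irrefl a : ~ Glt a a.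
Proof. by case. Qed.

Lemma Glt0_neq0 a : Glt (G0 G) a -> a <> G0 G.
Proof. by case=> _ /nesym. Qed.

Lemma Glt0_of_neq0 a : Gle (G0 G) a -> a <> G0 G -> Glt (G0 G) a.
Proof. by move=> a_ge0 /nesym. Qed.

Lemma Gnle_lt a b : ~ Gle b a -> Glt a b.
Proof.
move=> nba; split; last by move=> eab; subst b; apply: nba (Gle_refl a).
by case: (Gle_total a b) => // lba; case: nba.
Qed.

Lemma Gnmul_le n a b : Gle a b -> Gle (Gnmul n a) (Gnmul n b).
Proof. by move=> lab; elim: n => [|n IH] /=; [apply: Gle_refl | apply: Gle_add2]. Qed.

Lemma GnmulD m n a : Gnmul (m + n) a = Gadd (Gnmul m a) (Gnmul n a).
Proof. by elim: m => [|m IH]; rewrite ?add0n ?Gadd_0 // addSn /= IH Gadd_assoc. Qed.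

Lemma GnmulA m n a : Gnmul m (Gnmul n a) = Gnmul (m * n) a.
Proof. by elim: m => [|m IH] //=; rewrite mulSn GnmulD IH. Qed.

Lemma Gnmul1 a : Gnmul 1 a = a.
Proof. exact: Gaddr0. Qed.

Lemma Gabs_id a : Gle (G0 G) a -> Gabs a = a.
Proof. by rewrite /Gabs; case: excluded_middle_informative. Qed.

Lemma Gabs_gt0 a : a <> G0 G -> Glt (G0 G) (Gabs a).
Proof.
rewrite /Gabs => a_neq0; case: excluded_middle_informative => [a_ge0|a_nge0].
  exact: Glt0_of_neq0.
have a_le0 : Gle a (G0 G) by case: (Gle_total (G0 G) a).
split; first by have := Gle_add (Gopp a) a_le0; rewrite Gaddr_opp Gadd_0.
by move=> opp_a0; apply: a_neq0; rewrite -(Gaddr0 a) opp_a0 Gaddr_opp.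
Qed.

Lemma mul_ge1 m n : (1 <= m)%coq_nat -> (1 <= n)%coq_nat -> (1 <= m * n)%coq_nat.
Proof. by move=> /leP m_gt0 /leP n_gt0; apply/leP; rewrite muln_gt0 m_gt0. Qed.

Lemma Gasymp_refl a : Glt (G0 G) a -> Gasymp a a.
Proof.
by move=> a_gt0; do 2!split=> //; split; exists 1; rewrite Gnmul1; split=> //; apply: Gle_refl.
Qed.

Lemma Gasymp_sym a b : Gasymp a b -> Gasymp b a.
Proof. by case=> a_gt0 [b_gt0 [ba ab]]. Qed.

Lemma Gasymp_trans a b c : Gasymp a b -> Gasymp b c -> Gasymp a c.
Proof.
move=> [a_gt0 [_ [[n [n1 bna]] [m [m1 amb]]]]] [_ [c_gt0 [[k [k1 ckb]] [l [l1 blc]]]]].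
do 2!split=> //; split.
- exists (k * n); split; first exact: mul_ge1.
  by rewrite -GnmulA; apply: Gle_trans ckb (Gnmul_le k bna).
- exists (m * l); split; first exact: mul_ge1.
  by rewrite -GnmulA; apply: Gle_trans amb (Gnmul_le m blc).
Qed.

Definition Gll a b : Prop := forall n, (1 <= n)%coq_nat -> Glt (Gnmul n a) b.

Lemma Gll_asympl a b x : Gasymp a x -> Gll x b -> Gll a b.
Proof.
move=> [_ [_ [_ [m [m1 axm]]]]] xb n n1.
apply: Gle_lt_trans _ (xb _ (mul_ge1 n1 m1)).
by rewrite -GnmulA; apply: Gnmul_le.
Qed.

Lemma Gll_asympr a b y : Gasymp b y -> Gll a y -> Gll a b.
Proof.
move=> [_ [_ [[k [k1 ybk]] _]]] ay n n1; apply: Gnle_lt => bna.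
apply: Glt_irrefl (Gle_lt_trans _ (ay _ (mul_ge1 k1 n1))).
by rewrite -GnmulA; apply: Gle_trans ybk (Gnmul_le k bna).
Qed.

Lemma Gasymp_or_Gll a b : Glt (G0 G) a -> Gle a b -> Gasymp a b \/ Gll a b.
Proof.
move=> a_gt0 ab; case: (pselect (exists n, (1 <= n)%coq_nat /\ Gle b (Gnmul n a))).
  move=> bna; left; do 2!split=> //; first exact: Glt_le_trans a_gt0 ab.
  by split=> //; exists 1; rewrite Gnmul1; split.
move=> nbna; right => n n1; apply: Gnle_lt => bna.
by apply: nbna; exists n.
Qed.

Lemma Gasymp_double a : Glt (G0 G) a -> Gasymp a (Gadd a a).
Proof.
move=> a_gt0; have aa := Gle_addr a a_gt0.1.
do 2!split=> //; first exact: Glt_le_trans aa.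
split; first by exists 2; rewrite /= Gaddr0; split; [auto | apply: Gle_refl].
by exists 1; rewrite Gnmul1.
Qed.

End OrderedGroup.

Section ArchimedeanClasses.
Variable G : LOAG.
Implicit Types (a b c e : G) (A : ArcB G).

Lemma ArcB_eq A1 A2 : proj1_sig A1 = proj1_sig A2 -> A1 = A2.
Proof. by case: A1 A2 => [P1 p1] [P2 p2] /= P12; apply: eq_exist. Qed.

Lemma ArcB_lam A : exists a, A = lam a.
Proof. by case: A => [P [a P_a]]; exists a; apply: ArcB_eq. Qed.

Lemma lam_set_neq0 a : a <> G0 G -> lam_set a = Gasymp (Gabs a).
Proof.
move=> a_neq0; apply: funext => y; apply: propext; rewrite /lam_set.
by split=> [[[/a_neq0]|[]] | a_y] //; right.
Qed.

Lemma lam_set_gt0 a : Glt (G0 G) a -> lam_set a = Gasymp a.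
Proof. by move=> a_gt0; rewrite lam_set_neq0 ?Gabs_id //; [case: a_gt0 | apply: Glt0_neq0]. Qed.

Lemma lam_abs a : a <> G0 G -> lam (Gabs a) = lam a.
Proof.
move=> a_neq0; apply: ArcB_eq => /=.
by rewrite lam_set_gt0 ?lam_set_neq0 //; apply: Gabs_gt0.
Qed.

Lemma lam_asymp a b : Gasymp a b -> lam a = lam b.
Proof.
move=> ab; have [a_gt0 [b_gt0 _]] := ab.
apply: ArcB_eq => /=; rewrite !lam_set_gt0 //.
apply: funext => y; apply: propext; split; first exact: Gasymp_trans (Gasymp_sym ab).
exact: Gasymp_trans ab.
Qed.

Lemma lam_inj a b : Glt (G0 G) a -> Glt (G0 G) b -> lam a = lam b -> Gasymp a b.
Proof.
move=> a_gt0 b_gt0 /(f_equal (@proj1_sig _ _)) /=.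
by rewrite !lam_set_gt0 // => ->; apply: Gasymp_refl.
Qed.

Lemma lam_eq_bot a : lam a = arc_bot G <-> a = G0 G.
Proof.
split=> [/(f_equal (@proj1_sig _ _)) /= lam_a_bot | -> //].
have : lam_set a (G0 G) by rewrite lam_a_bot; left.
by case=> [[]|[_ [_ [/Glt_irrefl]]]].
Qed.

Lemma ArcB_lam_gt0 A : A <> arc_bot G -> exists2 e, Glt (G0 G) e & A = lam e.
Proof.
have [a ->] := ArcB_lam A => a_bot.
have a_neq0 : a <> G0 G by move=> a0; apply: a_bot; rewrite a0.
by exists (Gabs a); [apply: Gabs_gt0 | rewrite lam_abs].
Qed.

Lemma arc_bot_lt A : A <> arc_bot G -> ltS (@arc_le G) (arc_bot G) A.
Proof. by move=> A_bot; split; [left | apply: nesym]. Qed.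

Lemma arc_le_lam a b : Glt (G0 G) a -> Glt (G0 G) b ->
  arc_le (lam a) (lam b) <-> Gll a b \/ Gasymp a b.
Proof.
move=> a_gt0 b_gt0; split=> [|ab]; last by right; exists a, b.
case=> [/lam_eq_bot/(Glt0_neq0 a_gt0) // | [x [y [x_gt0 [y_gt0 [ax [by' xy]]]]]]].
have {}ax := lam_inj a_gt0 x_gt0 ax; have {}by' := lam_inj b_gt0 y_gt0 by'.
case: xy => [xy | xy]; first by left; apply: Gll_asympl ax (Gll_asympr by' xy).
by right; apply: Gasymp_trans ax (Gasymp_trans xy (Gasymp_sym by')).
Qed.

Lemma arc_le_lam_or_Gll a b : Glt (G0 G) a -> Glt (G0 G) b ->
  arc_le (lam a) (lam b) \/ Gll b a.
Proof.
move=> a_gt0 b_gt0; case: (Gle_total a b) => [ab | ba].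
  by left; apply/arc_le_lam => //; case: (Gasymp_or_Gll a_gt0 ab); tauto.
case: (Gasymp_or_Gll b_gt0 ba) => [/Gasymp_sym ab | ]; last by right.
by left; apply/arc_le_lam => //; right.
Qed.

Lemma lam_le_lam a b : Gle (G0 G) a -> Gle a b -> arc_le (lam a) (lam b).
Proof.
move=> a_ge0 ab; case: (pselect (a = G0 G)) => [-> | a_neq0]; first by left.
have a_gt0 := Glt0_of_neq0 a_ge0 a_neq0.
apply/arc_le_lam => //; first exact: Glt_le_trans a_gt0 ab.
by case: (Gasymp_or_Gll a_gt0 ab); tauto.
Qed.

Lemma lam_double a : Gle (G0 G) a -> lam (Gadd a a) = lam a.
Proof.
move=> a_ge0; case: (pselect (a = G0 G)) => [-> | a_neq0]; first by rewrite Gadd_0.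
exact/esym/lam_asymp/Gasymp_double/Glt0_of_neq0.
Qed.

Lemma lam_le_max a b c : Gle (G0 G) a -> Gle (G0 G) b -> Gle (G0 G) c ->
  Gle c (Gadd a b) -> arc_le (lam c) (lam a) \/ arc_le (lam c) (lam b).
Proof.
move=> a_ge0 b_ge0 c_ge0 cab; case: (Gle_total a b) => [ab | ba].
  right; rewrite -(lam_double b_ge0); apply: lam_le_lam c_ge0 (Gle_trans cab _).
  exact: Gle_add b ab.
left; rewrite -(lam_double a_ge0); apply: lam_le_lam c_ge0 (Gle_trans cab _).
exact: Gle_add2 (Gle_refl a) ba.
Qed.

Lemma lam_lt_of_Gll a b : Glt (G0 G) a -> Gll a b -> ltS (@arc_le G) (lam a) (lam b).
Proof.
move=> a_gt0 ab; have b_gt0 : Glt (G0 G) b.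
  by apply: Gle_lt_trans a_gt0.1 _; rewrite -(Gnmul1 a); apply: ab.
split; first by apply/arc_le_lam => //; left.
move=> /(lam_inj a_gt0 b_gt0) [_ [_ [[m [m1 bma]] _]]].
exact: Glt_irrefl (Gle_lt_trans bma (ab m m1)).
Qed.

Lemma lt_of_lam_lt a b : Gle (G0 G) a -> Glt (G0 G) b ->
  ltS (@arc_le G) (lam a) (lam b) -> Glt a b.
Proof.
move=> a_ge0 b_gt0; case: (pselect (a = G0 G)) => [-> // | a_neq0].
have a_gt0 := Glt0_of_neq0 a_ge0 a_neq0.
case=> /(arc_le_lam a_gt0 b_gt0) [ab | ab] nab; last by case: nab; apply: lam_asymp.
by rewrite -(Gnmul1 a); apply: ab.
Qed.

End ArchimedeanClasses.

Definition unitWO : WO.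
Proof.
refine (@Build_WO unit (fun _ _ => False) (fun _ f => f) (fun _ _ _ f _ => f) _ _).
- by do 2!case; right; left.
- by constructor.
Defined.

Lemma chi_infinite_no_least (S : Type) (leS : S -> S -> Prop) (botS : S) (K : WO) :
  chi_is leS botS K -> infinite_card K ->
  forall s, s <> botS -> exists2 t, t <> botS & ~ leS s t.
Proof.
move=> [_ [_ [_ minK]]] [f f_inj] s s_bot; apply: contrapT => no_t.
have unit_family : coinitial_family leS botS unitWO.
  exists (fun _ => s); split=> //; split=> // t t_bot; exists tt.
  by apply: contrapT => nst; apply: no_t; exists t.
have [||g g_inj] := minK unitWO _ _ unit_family.
- by move=> a [h _]; case: (h tt).
- by constructor; exact: tt.
have : f 0 = f 1 by apply: g_inj; case: (g (f 0)); case: (g (f 1)).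
by move/f_inj.
Qed.

Lemma exists_Gll (K : WO) (G : LOAG) : in_Gkappa K G -> infinite_card K ->
  forall e, Glt (G0 G) e -> exists2 e', Glt (G0 G) e' & Gll e' e.
Proof.
move=> chiK infK e e_gt0.
have lam_e_bot : lam e <> arc_bot G by move/lam_eq_bot; apply: Glt0_neq0.
have [t t_bot not_et] := chi_infinite_no_least chiK infK lam_e_bot.
have [e' e'_gt0 t_e'] := ArcB_lam_gt0 t_bot; subst t.
by case: (arc_le_lam_or_Gll e_gt0 e'_gt0) => // e'e; exists e'.
Qed.

Lemma lam_lt_near0 (K : WO) (G : LOAG) : in_Gkappa K G -> infinite_card K ->
  forall r, r <> arc_bot G -> exists2 delta, Glt (G0 G) delta &
    forall a, Gle (G0 G) a -> Glt a delta -> ltS (@arc_le G) (lam a) r.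
Proof.
move=> chiK infK r r_bot; have [e e_gt0 r_e] := ArcB_lam_gt0 r_bot; subst r.
have [delta delta_gt0 delta_e] := exists_Gll chiK infK e_gt0.
exists delta => // a a_ge0 a_delta.
case: (pselect (a = G0 G)) => [-> | a_neq0]; first exact: arc_bot_lt r_bot.
apply: lam_lt_of_Gll; first exact: Glt0_of_neq0.
by move=> n n1; apply: Gle_lt_trans (Gnmul_le n a_delta.1) (delta_e n n1).
Qed.

Lemma lam_Gmetric_ultrametric (X : Type) (G : LOAG) (d : X -> X -> G) :
  is_Gmetric d -> is_ultrametric (@arc_le G) (arc_bot G) (fun x y => lam (d x y)).
Proof.
move=> [d0 [d_ge0 [dC d_tri]]]; split; last split.
- by move=> x y; apply: iff_trans (lam_eq_bot _) (d0 x y).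
- by move=> x y; rewrite dC.
- by move=> x y z; apply: lam_le_max (d_tri x y z).
Qed.

Lemma lam_Gmetric_unif_equiv (K : WO) (X : Type) (G : LOAG) (d : X -> X -> G) :
  in_Gkappa K G -> infinite_card K -> is_Gmetric d ->
  unif_equiv (@arc_le G) (arc_bot G) d (fun x y => lam (d x y)).
Proof.
move=> chiK infK [_ [d_ge0 _]]; split=> eps.
- move=> eps_bot; have [delta delta_gt0 small] := lam_lt_near0 chiK infK eps_bot.
  by exists delta; split=> // x y; apply: small.
- move=> eps_gt0; exists (lam eps); split; first by move/lam_eq_bot; apply: Glt0_neq0.
  by move=> x y; apply: lt_of_lam_lt.
Qed.

Lemma Ult_of_Met_unif_equiv (X : topologicalType) (G : LOAG) (S : Type)
    (leS : S -> S -> Prop) (botS : S) (d : X -> X -> G) (e : X -> X -> S) :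
  Met d -> is_ultrametric leS botS e -> unif_equiv leS botS d e -> Ult leS botS e.
Proof.
move=> [_ d_open] e_ultra [de ed]; split=> // U; rewrite d_open.
split=> ballU x /ballU.
- case=> r [r_gt0 rU]; have [delta [delta_bot delta_r]] := ed r r_gt0.
  by exists delta; split=> // y /delta_r /rU.
- case=> r [r_bot rU]; have [delta [delta_gt0 delta_r]] := de r r_bot.
  by exists delta; split=> // y /delta_r /rU.
Qed.

Theorem lemma2p35 (X : topologicalType) (K : WO) (G : LOAG)
  (d : X -> X -> G) :
  has_infinite_metrizable_gauge X ->
  regular_card K ->
  in_MG X K ->
  in_Gkappa K G ->
  Met d ->
  Ult (@arc_le G) (arc_bot G) (fun x y => lam (d x y)) /\
  unif_equiv (@arc_le G) (arc_bot G) d (fun x y => lam (d x y)).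
Proof.
move=> _ [_ [infK _]] _ chiK d_met.
have d_unif := lam_Gmetric_unif_equiv chiK infK d_met.1.
split=> //; exact: Ult_of_Met_unif_equiv d_met (lam_Gmetric_ultrametric d_met.1) d_unif.
Qed.
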